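(* There is a constant $c$, independent of $n$, such that for all integers $n\ge2$ the operator norm of $\mathcal I_n^*: C(\overline\Omega_H)\to C(\overline\Omega_H)$ with respect to the uniform norm satisfies $$\|\mathcal I_n^*\|_\infty\le c(\log n)^3 .$$
   Context: Let $\mathbb R^4_H=\{\mathbf t\in\mathbb R^4: t_1+t_2+t_3+t_4=0\}$, $\mathbb Z^4_H=\mathbb Z^4\cap\mathbb R^4_H$, $\Omega_H=\{\mathbf t\in\mathbb R^4_H: -1<t_i-t_j\le1,\ 1\le i<j\le4\}$ with closure $\overline\Omega_H$. Let $\mathbb H=\{\mathbf k\in\mathbb Z^4_H: k_1\equiv k_2\equiv k_3\equiv k_4\pmod4\}$, $\phi_{\mathbf k}(\mathbf t)=e^{\frac{\pi i}{2}\mathbf k\cdot\mathbf t}$, $\mathbb H_n^*=\{\mathbf k\in\mathbb H: -4n\le k_i-k_j\le4n,\ 1\le i<j\le4\}$. For $\mathbf k\in\mathbb H_n^*$, $c^{(n)}_{\mathbf k}=1$ if $\max_ik_i-\min_ik_i<4n$, and otherwise $c^{(n)}_{\mathbf k}=1/\binom{p+q}{p}$ where $p$ (resp. $q$) is the number of coordinates equal to $\max_ik_i$ (resp. $\min_ik_i$). Let $\Phi_n^*(\mathbf t)=\frac1{4n^3}\sum_{\mathbf k\in\mathbb H_n^*}c^{(n)}_{\mathbf k}\phi_{\mathbf k}(\mathbf t)$ and, for $f\in C(\overline\Omega_H)$, $\mathcal I_n^*f(\mathbf t)=\sum_{\mathbf j\in\mathbb H_n^*}f(\tfrac{\mathbf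 j}{4n})\Phi_n^*(\mathbf t-\tfrac{\mathbf j}{4n})$. *)

From Stdlib Require Import Reals ZArith List Lia.
From Coquelicot Require Import Coquelicot.
Import ListNotations.
Open Scope R_scope.

Definition V4 : Type := (R * R * R * R)%type.
Definition Z4 : Type := (Z * Z * Z * Z)%type.

Definition t1 (t : V4) : R := let '(a, _, _, _) := t in a.
Definition t2 (t : V4) : R := let '(_, b, _, _) := t in b.
Definition t3 (t : V4) : R := let '(_, _, c, _) := t in c.
Definition t4 (t : V4) : R := let '(_, _, _, d) := t in d.

Definition k1 (k : Z4) : Z := let '(a, _, _, _) := k in a.
Definition k2 (k : Z4) : Z := let '(_, b, _, _) := k in b.
Definition k3 (k : Z4) : Z := let '(_, _, c, _) := k in c.
Definition k4 (k : Z4) : Z := let '(_, _, _, d) := k in d.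

Definition vsub (t s : V4) : V4 :=
  (t1 t - t1 s, t2 t - t2 s, t3 t - t3 s, t4 t - t4 s).

Definition vnorm (t : V4) : R :=
  Rmax (Rmax (Rabs (t1 t)) (Rabs (t2 t))) (Rmax (Rabs (t3 t)) (Rabs (t4 t))).

Definition in_Omega_bar (t : V4) : Prop :=
  t1 t + t2 t + t3 t + t4 t = 0 /\
  (-1 <= t1 t - t2 t <= 1) /\ (-1 <= t1 t - t3 t <= 1) /\
  (-1 <= t1 t - t4 t <= 1) /\ (-1 <= t2 t - t3 t <= 1) /\
  (-1 <= t2 t - t4 t <= 1) /\ (-1 <= t3 t - t4 t <= 1).

Definition continuous_on_Omega_bar (f : V4 -> C) : Prop :=
  forall t, in_Omega_bar t -> forall eps, 0 < eps ->
    exists delta, 0 < delta /\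
      forall s, in_Omega_bar s -> vnorm (vsub s t) < delta ->
        Cmod (Cminus (f s) (f t)) < eps.

Definition in_Hn_star (n : nat) (k : Z4) : Prop :=
  (k1 k + k2 k + k3 k + k4 k = 0)%Z /\
  (k1 k mod 4 = k2 k mod 4)%Z /\ (k2 k mod 4 = k3 k mod 4)%Z /\
  (k3 k mod 4 = k4 k mod 4)%Z /\
  (let N := (4 * Z.of_nat n)%Z in
   (- N <= k1 k - k2 k <= N)%Z /\ (- N <= k1 k - k3 k <= N)%Z /\
   (- N <= k1 k - k4 k <= N)%Z /\ (- N <= k2 k - k3 k <= N)%Z /\
   (- N <= k2 k - k4 k <= N)%Z /\ (- N <= k3 k - k4 k <= N)%Z).

Definition zbetween (a x b : Z) : bool := (Z.leb a x && Z.leb x b)%bool.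

Definition in_Hn_starb (n : nat) (k : Z4) : bool :=
  let N := (4 * Z.of_nat n)%Z in
  (Z.eqb (k1 k + k2 k + k3 k + k4 k) 0 &&
   Z.eqb (k1 k mod 4) (k2 k mod 4) && Z.eqb (k2 k mod 4) (k3 k mod 4) &&
   Z.eqb (k3 k mod 4) (k4 k mod 4) &&
   zbetween (- N) (k1 k - k2 k) N && zbetween (- N) (k1 k - k3 k) N &&
   zbetween (- N) (k1 k - k4 k) N && zbetween (- N) (k2 k - k3 k) N &&
   zbetween (- N) (k2 k - k4 k) N && zbetween (- N) (k3 k - k4 k) N)%bool.

(** The integers -4n, ..., 4n.  Every k in H_n^* has |k_i| <= 3n <= 4n
    (k_i = (1/4) sum_j (k_i - k_j)), so the box [-4n,4n]^4 contains H_n^*. *)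
Definition zrange (n : nat) : list Z :=
  map (fun i => (Z.of_nat i - 4 * Z.of_nat n)%Z) (seq 0 (8 * n + 1)).

Definition Hn_star_list (n : nat) : list Z4 :=
  filter (in_Hn_starb n)
    (flat_map (fun a => flat_map (fun b => flat_map (fun c =>
       map (fun d => (a, b, c, d)) (zrange n)) (zrange n)) (zrange n)) (zrange n)).

Definition Csum {A : Type} (l : list A) (F : A -> C) : C :=
  fold_right (fun a acc => Cplus (F a) acc) (RtoC 0) l.

Definition dotZR (k : Z4) (t : V4) : R :=
  IZR (k1 k) * t1 t + IZR (k2 k) * t2 t + IZR (k3 k) * t3 t + IZR (k4 k) * t4 t.

Definition phi (k : Z4) (t : V4) : C :=
  (cos (PI / 2 * dotZR k t), sin (PI / 2 * dotZR k t)).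

Definition zmax4 (k : Z4) : Z := Z.max (Z.max (k1 k) (k2 k)) (Z.max (k3 k) (k4 k)).
Definition zmin4 (k : Z4) : Z := Z.min (Z.min (k1 k) (k2 k)) (Z.min (k3 k) (k4 k)).
Definition count_eq (k : Z4) (v : Z) : nat :=
  length (filter (fun x => Z.eqb x v) [k1 k; k2 k; k3 k; k4 k]).

Definition binomR (m p : nat) : R := INR (fact m) / (INR (fact p) * INR (fact (m - p))).

Definition coef (n : nat) (k : Z4) : R :=
  if Z.ltb (zmax4 k - zmin4 k) (4 * Z.of_nat n) then 1
  else let p := count_eq k (zmax4 k) in
       let q := count_eq k (zmin4 k) in
       / binomR (p + q) p.

Definition Phi_star (n : nat) (t : V4) : C :=
  Cmult (RtoC (/ (4 * INR n ^ 3)))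
        (Csum (Hn_star_list n) (fun k => Cmult (RtoC (coef n k)) (phi k t))).

Definition node (n : nat) (j : Z4) : V4 :=
  let s := / (4 * INR n) in
  (IZR (k1 j) * s, IZR (k2 j) * s, IZR (k3 j) * s, IZR (k4 j) * s).

Definition In_star (n : nat) (f : V4 -> C) (t : V4) : C :=
  Csum (Hn_star_list n) (fun j => Cmult (f (node n j)) (Phi_star n (vsub t (node n j)))).

From Pilot Require Import Defs.
From Stdlib Require Import Reals ZArith List Lia Lra Permutation.
From Coquelicot Require Import Coquelicot.
Import ListNotations.
Open Scope R_scope.

(** Write each point of [H_n^*] as [k = 4m - |m|] with [m] in [{0,...,n}^4] and
    [min m = 0].  Then [phi_k] factorizes over the coordinates, and [c^(n)_k]
    depends only on which [m_i] equal [0] or [n].  Grouping the [m_i] by these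
    three levels writes [Phi_n^*] as a combination of products of four
    one-dimensional exponential sums, one of which is [1], each other one being
    bounded by [D_n(th) = min (n + 1, 1 / |sin (pi th)|)].  Hence
    [|Phi_n^*(x)| <= c n^-3] times a sum of triple products [D_n(x_i) D_n(x_j) D_n(x_l)].
    Summed over the nodes [j / 4n], three coordinates of [j] determine the fourth,
    so the sum is at most [(sum_k D_n(t - k / 4n))^3], and a harmonic-sum estimate
    gives [sum_k D_n(t - k / 4n) = O(n log n)]; the powers of [n] cancel. *)

Definition rsum {A : Type} (l : list A) (f : A -> R) : R :=
  fold_right (fun a acc => f a + acc) 0 l.

Lemma rsum_cons {A} (a : A) l f : rsum (a :: l) f = f a + rsum l f.
Proof. reflexivity. Qed.

Lemma Csum_cons {A} (a : A) l f : Csum (a :: l) f = Cplus (f a) (Csum l f).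
Proof. reflexivity. Qed.

Section ListSums.
Context {A B : Type}.

Lemma rsum_ext (l : list A) f g :
  (forall x, In x l -> f x = g x) -> rsum l f = rsum l g.
Proof.
  induction l as [|a l IH]; intros H; simpl; auto.
  f_equal; [apply H | apply IH; intros x Hx; apply H]; simpl; auto.
Qed.

Lemma Csum_ext (l : list A) f g :
  (forall x, In x l -> f x = g x) -> Csum l f = Csum l g.
Proof.
  induction l as [|a l IH]; intros H; simpl; auto.
  f_equal; [apply H | apply IH; intros x Hx; apply H]; simpl; auto.
Qed.

Lemma rsum_le (l : list A) f g :
  (forall x, In x l -> f x <= g x) -> rsum l f <= rsum l g.
Proof.
  induction l as [|a l IH]; intros H; simpl; [lra|].
  apply Rplus_le_compat; [apply H | apply IH; intros x Hx; apply H]; simpl; auto.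
Qed.

Lemma rsum_nonneg (l : list A) f :
  (forall x, In x l -> 0 <= f x) -> 0 <= rsum l f.
Proof.
  induction l as [|a l IH]; intros H; simpl; [lra|].
  apply Rplus_le_le_0_compat; [apply H | apply IH; intros x Hx; apply H]; simpl; auto.
Qed.

Lemma rsum_le_const (l : list A) f c :
  (forall x, In x l -> f x <= c) -> rsum l f <= INR (length l) * c.
Proof.
  induction l as [|a l IH]; intros H; simpl length; rewrite ?S_INR; simpl; [lra|].
  assert (f a <= c) by (apply H; simpl; auto).
  assert (rsum l f <= INR (length l) * c) by (apply IH; intros; apply H; simpl; auto).
  lra.
Qed.

Lemma rsum_plus (l : list A) f g : rsum l (fun x => f x + g x) = rsum l f + rsum l g.
Proof. induction l; simpl; [|rewrite IHl]; ring. Qed.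

Lemma rsum_scal_l (l : list A) c f : rsum l (fun x => c * f x) = c * rsum l f.
Proof. induction l; simpl; [|rewrite IHl]; ring. Qed.

Lemma rsum_scal_r (l : list A) c f : rsum l (fun x => f x * c) = rsum l f * c.
Proof. induction l; simpl; [|rewrite IHl]; ring. Qed.

Lemma rsum_map (l : list B) (h : B -> A) f : rsum (map h l) f = rsum l (fun x => f (h x)).
Proof. induction l; simpl; [|rewrite IHl]; auto. Qed.

Lemma rsum_flat_map (l : list B) (h : B -> list A) f :
  rsum (flat_map h l) f = rsum l (fun x => rsum (h x) f).
Proof.
  induction l as [|b l IH]; simpl; auto. rewrite <- IH.
  induction (h b); simpl; [|rewrite IHl0]; ring.
Qed.

Lemma rsum_remove (dec : forall x y : A, {x = y} + {x <> y}) (l : list A) a f :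
  (forall x, 0 <= f x) -> In a l -> f a + rsum (remove dec a l) f <= rsum l f.
Proof.
  intros Hf. induction l as [|b l IH]; simpl; [tauto|]. intros Hin.
  assert (Hrem : rsum (remove dec a l) f <= rsum l f).
  { clear IH Hin. induction l as [|c l IHc]; simpl; [lra|].
    destruct (dec a c); simpl; pose proof (Hf c); lra. }
  destruct (dec a b) as [<-|Hab]; [lra|]. simpl.
  destruct Hin as [->|Hin]; [congruence|]. specialize (IH Hin). lra.
Qed.

Lemma rsum_incl (dec : forall x y : A, {x = y} + {x <> y}) (l1 l2 : list A) f :
  NoDup l1 -> incl l1 l2 -> (forall x, 0 <= f x) -> rsum l1 f <= rsum l2 f.
Proof.
  revert l2. induction l1 as [|a l1 IH]; intros l2 Hnd Hinc Hf; simpl.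
  - apply rsum_nonneg; auto.
  - inversion_clear Hnd as [|? ? Ha Hnd1].
    pose proof (rsum_remove dec l2 a f Hf (Hinc a (or_introl eq_refl))).
    assert (rsum l1 f <= rsum (remove dec a l2) f); [|lra].
    apply IH; auto. intros x Hx. apply in_in_remove.
    + intros ->; contradiction.
    + apply Hinc; simpl; auto.
Qed.

Lemma Csum_plus (l : list A) f g :
  Csum l (fun x => Cplus (f x) (g x)) = Cplus (Csum l f) (Csum l g).
Proof. induction l; simpl; [|rewrite IHl]; ring. Qed.

Lemma Csum_scal_l (l : list A) c f :
  Csum l (fun x => Cmult c (f x)) = Cmult c (Csum l f).
Proof. induction l; simpl; [|rewrite IHl]; ring. Qed.

Lemma Csum_scal_r (l : list A) c f :
  Csum l (fun x => Cmult (f x) c) = Cmult (Csum l f) c.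
Proof. induction l; simpl; [|rewrite IHl]; ring. Qed.

Lemma Csum_zero (l : list A) f : (forall x, In x l -> f x = RtoC 0) -> Csum l f = RtoC 0.
Proof.
  induction l; intros H; simpl; auto.
  rewrite H, IHl; [ring | intros x Hx; apply H | ..]; simpl; auto.
Qed.

Lemma Csum_app (l1 l2 : list A) f : Csum (l1 ++ l2) f = Cplus (Csum l1 f) (Csum l2 f).
Proof. induction l1; simpl; [|rewrite IHl1]; ring. Qed.

Lemma Csum_map (l : list B) (h : B -> A) f : Csum (map h l) f = Csum l (fun x => f (h x)).
Proof. induction l; simpl; [|rewrite IHl]; auto. Qed.

Lemma Csum_flat_map (l : list B) (h : B -> list A) f :
  Csum (flat_map h l) f = Csum l (fun x => Csum (h x) f).
Proof. induction l; simpl; auto. rewrite Csum_app, IHl. reflexivity. Qed.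

Lemma Csum_filter (l : list A) (P : A -> bool) f :
  Csum (filter P l) f = Csum l (fun x => if P x then f x else RtoC 0).
Proof. induction l; simpl; auto. destruct (P a); simpl; rewrite IHl; ring. Qed.

Lemma Csum_perm (l l' : list A) f : Permutation l l' -> Csum l f = Csum l' f.
Proof. induction 1; simpl; try congruence; ring. Qed.

Lemma Cmod_Csum_le (l : list A) f : Cmod (Csum l f) <= rsum l (fun x => Cmod (f x)).
Proof.
  induction l; simpl.
  - rewrite Cmod_0; lra.
  - eapply Rle_trans; [apply Cmod_triangle | lra].
Qed.

End ListSums.

Lemma rsum_swap {A B} (l1 : list A) (l2 : list B) (F : A -> B -> R) :
  rsum l1 (fun a => rsum l2 (F a)) = rsum l2 (fun b => rsum l1 (fun a => F a b)).
Proof.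
  induction l1 as [|a l1 IH].
  - symmetry. induction l2 as [|b l2 IH2]; [reflexivity|].
    rewrite rsum_cons, IH2. simpl; ring.
  - rewrite rsum_cons, IH, <- rsum_plus. reflexivity.
Qed.

Lemma Csum_swap {A B} (l1 : list A) (l2 : list B) (F : A -> B -> C) :
  Csum l1 (fun a => Csum l2 (F a)) = Csum l2 (fun b => Csum l1 (fun a => F a b)).
Proof.
  induction l1 as [|a l1 IH].
  - symmetry; apply Csum_zero; reflexivity.
  - rewrite Csum_cons, IH, <- Csum_plus. reflexivity.
Qed.

(** * Exponential sums on one coordinate *)

Definition expi (a : R) : C := (cos a, sin a).

Lemma expi_add a b : expi (a + b) = Cmult (expi a) (expi b).
Proof. unfold expi, Cmult; simpl. rewrite cos_plus, sin_plus. f_equal; ring. Qed.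

Lemma Cmod_expi a : Cmod (expi a) = 1.
Proof.
  unfold Cmod, expi; simpl. pose proof (sin2_cos2 a) as H. unfold Rsqr in H.
  replace (cos a * (cos a * 1) + sin a * (sin a * 1)) with 1 by nra. apply sqrt_1.
Qed.

Lemma Cmod_expi_sub1 a : Cmod (Cminus (expi a) (RtoC 1)) = 2 * Rabs (sin (a / 2)).
Proof.
  unfold Cmod, expi, Cminus, Cplus, Copp, RtoC; simpl.
  set (h := a / 2). replace a with (2 * h) by (unfold h; field).
  rewrite cos_2a_sin, sin_2a.
  pose proof (sin2_cos2 h) as H. unfold Rsqr in H.
  set (s := sin h) in *. set (c := cos h) in *.
  replace ((1 - 2 * s * s + - (1)) * ((1 - 2 * s * s + - (1)) * 1) + (2 * s * c + - 0) * ((2 * s * c + - 0) * 1))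
    with (Rsqr (2 * s)) by (unfold Rsqr; nra).
  rewrite sqrt_Rsqr_abs, Rabs_mult, Rabs_pos_eq by lra. reflexivity.
Qed.

Definition emode (m : nat) (th : R) : C := expi (INR m * (2 * PI * th)).

Lemma emode_0 th : emode 0 th = RtoC 1.
Proof. unfold emode, expi, RtoC. rewrite Rmult_0_l, cos_0, sin_0. reflexivity. Qed.

Lemma geometric_sum_expi a s L :
  Cmult (Cminus (expi a) (RtoC 1)) (Csum (seq s L) (fun m => expi (INR m * a)))
  = Cminus (expi (INR (s + L) * a)) (expi (INR s * a)).
Proof.
  revert s; induction L as [|L IH]; intros s; simpl seq.
  - rewrite Nat.add_0_r. simpl. ring.
  - rewrite Csum_cons, Cmult_plus_distr_l, IH.
    replace (S s + L)%nat with (s + S L)%nat by lia.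
    rewrite S_INR, Rmult_plus_distr_r, Rmult_1_l, expi_add. ring.
Qed.

Lemma Cmod_sum_emode_mul_sin th s L :
  Cmod (Csum (seq s L) (fun m => emode m th)) * Rabs (sin (PI * th)) <= 1.
Proof.
  pose proof (f_equal Cmod (geometric_sum_expi (2 * PI * th) s L)) as G.
  rewrite Cmod_mult, Cmod_expi_sub1 in G.
  replace (2 * PI * th / 2) with (PI * th) in G by field.
  assert (Cmod (Cminus (expi (INR (s + L) * (2 * PI * th))) (expi (INR s * (2 * PI * th)))) <= 2).
  { unfold Cminus. eapply Rle_trans; [apply Cmod_triangle|].
    rewrite Cmod_opp, !Cmod_expi. lra. }
  unfold emode. lra.
Qed.

(** The geometric-sum bound [1 / |sin (pi th)|], capped by the trivial bound [n + 1]. *)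
Definition dmaj (n : nat) (th : R) : R := / Rmax (Rabs (sin (PI * th))) (/ (INR n + 1)).

Lemma dmaj_ge_1 n th : 1 <= dmaj n th.
Proof.
  unfold dmaj. pose proof (pos_INR n).
  set (M := Rmax _ _).
  assert (HM : 0 < M <= 1).
  { assert (0 < / (INR n + 1) <= 1).
    { split; [apply Rinv_0_lt_compat; lra|].
      rewrite <- Rinv_1 at 2. apply Rinv_le_contravar; lra. }
    assert (Rabs (sin (PI * th)) <= 1) by (apply Rabs_le, SIN_bound).
    split; [eapply Rlt_le_trans; [|apply Rmax_r]; lra | apply Rmax_lub; lra]. }
  apply Rmult_le_reg_r with M; [lra|]. rewrite Rinv_l; lra.
Qed.

Lemma Cmod_sum_emode_le n th s L : (L <= S n)%nat ->
  Cmod (Csum (seq s L) (fun m => emode m th)) <= dmaj n th.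
Proof.
  intros HL. unfold dmaj. pose proof (pos_INR n).
  assert (0 < / (INR n + 1)) by (apply Rinv_0_lt_compat; lra).
  destruct (Rle_dec (/ (INR n + 1)) (Rabs (sin (PI * th)))) as [Hs|Hs].
  - rewrite Rmax_left by lra. apply Rmult_le_reg_r with (Rabs (sin (PI * th))); [lra|].
    rewrite Rinv_l by lra. apply Cmod_sum_emode_mul_sin.
  - rewrite Rmax_right, Rinv_inv by lra.
    eapply Rle_trans; [apply Cmod_Csum_le|].
    eapply Rle_trans; [apply rsum_le_const with (c := 1)|].
    + intros m _. unfold emode. rewrite Cmod_expi. lra.
    + rewrite length_seq. apply le_INR in HL. rewrite S_INR in HL. lra.
Qed.

(** * The index set H_n^* *)

Definition box4 {A : Type} (l : list A) : list (A * A * A * A) :=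
  flat_map (fun a => flat_map (fun b => flat_map (fun c =>
     map (fun d => (a, b, c, d)) l) l) l) l.

Lemma in_box4 {A} (l : list A) a b c d :
  In (a, b, c, d) (box4 l) <-> In a l /\ In b l /\ In c l /\ In d l.
Proof.
  unfold box4. rewrite in_flat_map. split.
  - intros (a' & Ha & H). apply in_flat_map in H as (b' & Hb & H).
    apply in_flat_map in H as (c' & Hc & H). apply in_map_iff in H as (d' & Heq & Hd).
    inversion Heq; subst. auto.
  - intros (Ha & Hb & Hc & Hd). exists a; split; auto.
    apply in_flat_map; exists b; split; auto.
    apply in_flat_map; exists c; split; auto.
    apply in_map_iff; exists d; auto.
Qed.

Lemma NoDup_flat_map_key {A B} (l : list A) (f : A -> list B) (key : B -> A) :
  NoDup l -> (forall a, In a l -> NoDup (f a)) -> (forall a x, In x (f a) -> key x = a) ->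
  NoDup (flat_map f l).
Proof.
  induction l as [|a l IH]; intros Hl Hf Hk; simpl; [constructor|].
  inversion_clear Hl as [|? ? Ha Hl']. apply NoDup_app.
  - apply Hf; simpl; auto.
  - apply IH; auto. intros; apply Hf; simpl; auto.
  - intros x Hx Hx'. apply in_flat_map in Hx' as (b & Hb & Hxb).
    apply Hk in Hx, Hxb. congruence.
Qed.

Lemma NoDup_box4 {A} (l : list A) : NoDup l -> NoDup (box4 l).
Proof.
  intros Hl. unfold box4.
  apply NoDup_flat_map_key with (key := fun x => fst (fst (fst x))); auto.
  2:{ intros a x Hx. apply in_flat_map in Hx as (b & _ & Hx).
      apply in_flat_map in Hx as (c & _ & Hx). apply in_map_iff in Hx as (d & <- & _).
      reflexivity. }
  intros a _. apply NoDup_flat_map_key with (key := fun x => snd (fst (fst x))); auto.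
  2:{ intros b x Hx. apply in_flat_map in Hx as (c & _ & Hx).
      apply in_map_iff in Hx as (d & <- & _). reflexivity. }
  intros b _. apply NoDup_flat_map_key with (key := fun x => snd (fst x)); auto.
  2:{ intros c x Hx. apply in_map_iff in Hx as (d & <- & _). reflexivity. }
  intros c _. apply FinFun.Injective_map_NoDup_in; auto.
  intros x y _ _ H. now inversion H.
Qed.

Lemma Csum_box4 {A} (l : list A) F :
  Csum (box4 l) F =
  Csum l (fun a => Csum l (fun b => Csum l (fun c => Csum l (fun d => F (a, b, c, d))))).
Proof.
  unfold box4. rewrite Csum_flat_map. apply Csum_ext; intros a _.
  rewrite Csum_flat_map. apply Csum_ext; intros b _.
  rewrite Csum_flat_map. apply Csum_ext; intros c _.
  apply Csum_map.
Qed.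

Lemma Csum_box4_prod {A} (l : list A) f1 f2 f3 f4 :
  Csum (box4 l) (fun m => let '(a, b, c, d) := m in
                          Cmult (Cmult (Cmult (f1 a) (f2 b)) (f3 c)) (f4 d))
  = Cmult (Cmult (Cmult (Csum l f1) (Csum l f2)) (Csum l f3)) (Csum l f4).
Proof.
  rewrite Csum_box4, <- Csum_scal_r, <- Csum_scal_r, <- Csum_scal_r.
  apply Csum_ext; intros a _.
  rewrite <- (Csum_scal_l l (f1 a) f2), <- Csum_scal_r, <- Csum_scal_r.
  apply Csum_ext; intros b _.
  rewrite <- (Csum_scal_l l (Cmult (f1 a) (f2 b)) f3), <- Csum_scal_r.
  apply Csum_ext; intros c _.
  rewrite <- Csum_scal_l. reflexivity.
Qed.

Lemma tuple4_eq_inv {A} (a b c d a' b' c' d' : A) :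
  (a, b, c, d) = (a', b', c', d') -> a = a' /\ b = b' /\ c = c' /\ d = d'.
Proof. intros H. injection H. auto. Qed.

Lemma in_zrange n z : In z (zrange n) <-> (- 4 * Z.of_nat n <= z <= 4 * Z.of_nat n)%Z.
Proof.
  unfold zrange. rewrite in_map_iff. split.
  - intros (i & <- & Hi). apply in_seq in Hi. lia.
  - intros H. exists (Z.to_nat (z + 4 * Z.of_nat n)). rewrite in_seq. lia.
Qed.

Lemma NoDup_zrange n : NoDup (zrange n).
Proof.
  apply FinFun.Injective_map_NoDup_in; [intros x y _ _ H; lia | apply seq_NoDup].
Qed.

Lemma in_Hn_starb_spec n k : in_Hn_starb n k = true <-> in_Hn_star n k.
Proof.
  unfold in_Hn_starb, in_Hn_star, zbetween.
  rewrite !Bool.andb_true_iff, !Z.eqb_eq, !Z.leb_le. tauto.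
Qed.

(** The enumeration box [[-4n, 4n]^4] loses nothing: [k] in [H_n^*] has [|k_i| <= 3n]. *)
Lemma in_Hn_star_list n k : In k (Hn_star_list n) <-> in_Hn_star n k.
Proof.
  destruct k as [[[a b] c] d].
  change (Hn_star_list n) with (filter (in_Hn_starb n) (box4 (zrange n))).
  rewrite filter_In, in_Hn_starb_spec.
  split; [tauto|]. intros H. split; [|exact H].
  apply in_box4. rewrite !in_zrange.
  unfold in_Hn_star, k1, k2, k3, k4 in H. cbv beta iota zeta in H. lia.
Qed.

Lemma NoDup_Hn_star_list n : NoDup (Hn_star_list n).
Proof. apply NoDup_filter, NoDup_box4, NoDup_zrange. Qed.

(** [H_n^*] is parametrized by the points [m] of [{0,...,n}^4] with [min m = 0],
    through [k_i = 4 m_i - |m|]. *)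
Definition hn_point (m : nat * nat * nat * nat) : Z4 :=
  let '(a, b, c, d) := m in
  let s := Z.of_nat (a + b + c + d) in
  (4 * Z.of_nat a - s, 4 * Z.of_nat b - s, 4 * Z.of_nat c - s, 4 * Z.of_nat d - s)%Z.

Definition has_zero (m : nat * nat * nat * nat) : bool :=
  let '(a, b, c, d) := m in (Nat.eqb a 0 || Nat.eqb b 0 || Nat.eqb c 0 || Nat.eqb d 0)%bool.

Definition grid (n : nat) : list (nat * nat * nat * nat) := box4 (seq 0 (S n)).

Lemma in_grid_has_zero n a b c d :
  In (a, b, c, d) (filter has_zero (grid n)) <->
  (a <= n /\ b <= n /\ c <= n /\ d <= n /\ (a = 0 \/ b = 0 \/ c = 0 \/ d = 0))%nat.
Proof.
  unfold grid. rewrite filter_In, in_box4, !in_seq. simpl.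
  rewrite !Bool.orb_true_iff, !Nat.eqb_eq. lia.
Qed.

Lemma mod4_shift a s : ((4 * a - s) mod 4 = (- s) mod 4)%Z.
Proof. replace (4 * a - s)%Z with (- s + a * 4)%Z by ring. apply Z_mod_plus_full. Qed.

Lemma hn_point_in n m : In m (filter has_zero (grid n)) -> In (hn_point m) (Hn_star_list n).
Proof.
  destruct m as [[[a b] c] d]. rewrite in_grid_has_zero, in_Hn_star_list.
  intros H. unfold in_Hn_star, hn_point, k1, k2, k3, k4. cbv beta iota zeta.
  rewrite !mod4_shift. lia.
Qed.

Lemma hn_point_onto n k :
  In k (Hn_star_list n) -> exists m, In m (filter has_zero (grid n)) /\ hn_point m = k.
Proof.
  destruct k as [[[k1 k2] k3] k4]. rewrite in_Hn_star_list.
  unfold in_Hn_star, Defs.k1, Defs.k2, Defs.k3, Defs.k4. cbv beta iota zeta.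
  intros (Hs & H12 & H23 & H34 & Hd).
  set (r := (k4 mod 4)%Z).
  assert (E1 : (k1 = 4 * (k1 / 4) + r)%Z) by (unfold r; rewrite <- H34, <- H23, <- H12; apply Z.div_mod; lia).
  assert (E2 : (k2 = 4 * (k2 / 4) + r)%Z) by (unfold r; rewrite <- H34, <- H23; apply Z.div_mod; lia).
  assert (E3 : (k3 = 4 * (k3 / 4) + r)%Z) by (unfold r; rewrite <- H34; apply Z.div_mod; lia).
  assert (E4 : (k4 = 4 * (k4 / 4) + r)%Z) by (unfold r; apply Z.div_mod; lia).
  set (q1 := (k1 / 4)%Z) in *. set (q2 := (k2 / 4)%Z) in *.
  set (q3 := (k3 / 4)%Z) in *. set (q4 := (k4 / 4)%Z) in *.
  clearbody q1 q2 q3 q4 r.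
  set (qm := Z.min (Z.min q1 q2) (Z.min q3 q4)).
  exists (Z.to_nat (q1 - qm), Z.to_nat (q2 - qm), Z.to_nat (q3 - qm), Z.to_nat (q4 - qm)).
  rewrite in_grid_has_zero. unfold hn_point, qm.
  split; [lia | repeat f_equal; lia].
Qed.

Lemma hn_point_inj n m m' :
  In m (filter has_zero (grid n)) -> In m' (filter has_zero (grid n)) ->
  hn_point m = hn_point m' -> m = m'.
Proof.
  destruct m as [[[a b] c] d], m' as [[[a' b'] c'] d'].
  rewrite !in_grid_has_zero. unfold hn_point. intros H H' Heq.
  apply tuple4_eq_inv in Heq. repeat f_equal; lia.
Qed.

Lemma hn_point_perm n : Permutation (map hn_point (filter has_zero (grid n))) (Hn_star_list n).
Proof.
  apply NoDup_Permutation.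
  - apply FinFun.Injective_map_NoDup_in; [intros x y; apply hn_point_inj|].
    apply NoDup_filter, NoDup_box4, seq_NoDup.
  - apply NoDup_Hn_star_list.
  - intros k; split.
    + intros (m & <- & Hm)%in_map_iff. now apply hn_point_in.
    + intros (m & Hm & <-)%hn_point_onto. now apply in_map.
Qed.

(** * A pointwise bound for the kernel Phi_n^* *)

Inductive level := Bottom | Inner | Top.

Definition level_eqb (a b : level) : bool :=
  match a, b with
  | Bottom, Bottom | Inner, Inner | Top, Top => true
  | _, _ => false
  end.

Lemma level_eqb_refl a : level_eqb a a = true.
Proof. now destruct a. Qed.

Definition level_of (n m : nat) : level :=
  if Nat.eqb m 0 then Bottom else if Nat.eqb m n then Top else Inner.

Definition all_levels : list level := [Bottom; Inner; Top].

Definition level_count (c : level) (a : level * level * level * level) : nat :=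
  let '(a1, a2, a3, a4) := a in length (filter (fun y => level_eqb y c) [a1; a2; a3; a4]).

(** [c^(n)_k] for [k = hn_point m], in terms of [p = #{i | m_i = n}] and
    [q = #{i | m_i = 0}]; patterns with [q = 0] do not come from [H_n^*]. *)
Definition level_weight (a : level * level * level * level) : R :=
  let p := level_count Top a in
  let q := level_count Bottom a in
  if Nat.eqb q 0 then 0 else if Nat.eqb p 0 then 1 else / binomR (p + q) p.

Lemma length_filter4 {A} (p : A -> bool) x1 x2 x3 x4 :
  length (filter p [x1; x2; x3; x4]) =
  (Nat.b2n (p x1) + Nat.b2n (p x2) + Nat.b2n (p x3) + Nat.b2n (p x4))%nat.
Proof. simpl. now destruct (p x1), (p x2), (p x3), (p x4). Qed.

Lemma level_of_Bottom n m : level_eqb (level_of n m) Bottom = Nat.eqb m 0.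
Proof. unfold level_of. destruct (Nat.eqb m 0), (Nat.eqb m n); reflexivity. Qed.

Lemma level_of_Top n m : (1 <= n)%nat -> level_eqb (level_of n m) Top = Nat.eqb m n.
Proof.
  intros Hn. unfold level_of.
  destruct (Nat.eqb_spec m 0) as [->|]; [symmetry; apply Nat.eqb_neq; lia|].
  now destruct (Nat.eqb m n).
Qed.

Lemma count_eq_hn_point a b c d v :
  count_eq (hn_point (a, b, c, d)) (4 * Z.of_nat v - Z.of_nat (a + b + c + d)) =
  (Nat.b2n (Nat.eqb a v) + Nat.b2n (Nat.eqb b v) + Nat.b2n (Nat.eqb c v) + Nat.b2n (Nat.eqb d v))%nat.
Proof.
  unfold count_eq. rewrite length_filter4. unfold hn_point, k1, k2, k3, k4.
  assert (E : forall x s, Z.eqb (4 * Z.of_nat x - s) (4 * Z.of_nat v - s) = Nat.eqb x v).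
  { intros x s. destruct (Z.eqb_spec (4 * Z.of_nat x - s) (4 * Z.of_nat v - s)), (Nat.eqb_spec x v);
      auto; lia. }
  now rewrite !E.
Qed.

Lemma coef_hn_point n a b c d : (1 <= n)%nat -> In (a, b, c, d) (filter has_zero (grid n)) ->
  coef n (hn_point (a, b, c, d)) = level_weight (level_of n a, level_of n b, level_of n c, level_of n d).
Proof.
  intros Hn Hm. rewrite in_grid_has_zero in Hm.
  set (k := hn_point (a, b, c, d)).
  assert (Hk : (k1 k, k2 k, k3 k, k4 k) = hn_point (a, b, c, d)) by reflexivity.
  unfold hn_point in Hk. apply tuple4_eq_inv in Hk.
  assert (Hmin : zmin4 k = (4 * Z.of_nat 0 - Z.of_nat (a + b + c + d))%Z)
    by (unfold zmin4; lia).
  unfold level_weight, level_count. rewrite !length_filter4, !level_of_Bottom, !level_of_Top by exact Hn.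
  rewrite <- count_eq_hn_point. fold k.
  assert (Hq : Nat.eqb (count_eq k (4 * Z.of_nat 0 - Z.of_nat (a + b + c + d))) 0 = false).
  { unfold k. rewrite count_eq_hn_point. apply Nat.eqb_neq.
    destruct Hm as (_ & _ & _ & _ & [-> | [-> | [-> | ->]]]); simpl; lia. }
  rewrite Hq. unfold coef.
  destruct (Z.ltb_spec (zmax4 k - zmin4 k) (4 * Z.of_nat n)) as [Hlt|Hge];
    rewrite Hmin in *; unfold zmax4 in *.
  - assert (Hbelow : forall x, (x < n)%nat -> Nat.eqb x n = false)
      by (intros; apply Nat.eqb_neq; lia).
    rewrite !Hbelow by lia. reflexivity.
  - assert (Hmax : Z.max (Z.max (k1 k) (k2 k)) (Z.max (k3 k) (k4 k))
                   = (4 * Z.of_nat n - Z.of_nat (a + b + c + d))%Z) by lia.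
    rewrite Hmax. unfold k. rewrite count_eq_hn_point.
    assert (Hp : Nat.eqb (Nat.b2n (Nat.eqb a n) + Nat.b2n (Nat.eqb b n) + Nat.b2n (Nat.eqb c n)
                          + Nat.b2n (Nat.eqb d n)) 0 = false).
    { apply Nat.eqb_neq.
      destruct (Nat.eqb_spec a n), (Nat.eqb_spec b n), (Nat.eqb_spec c n), (Nat.eqb_spec d n);
        simpl; lia. }
    now rewrite Hp.
Qed.

Lemma phi_hn_point a b c d x : t1 x + t2 x + t3 x + t4 x = 0 ->
  phi (hn_point (a, b, c, d)) x =
  Cmult (Cmult (Cmult (emode a (t1 x)) (emode b (t2 x))) (emode c (t3 x))) (emode d (t4 x)).
Proof.
  intros Hs. unfold phi, dotZR, hn_point, k1, k2, k3, k4, emode. cbv beta iota.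
  change (cos ?u, sin ?u) with (expi u).
  rewrite !minus_IZR, !mult_IZR, <- !INR_IZR_INZ, !plus_INR, <- !expi_add. f_equal.
  replace (t4 x) with (- (t1 x + t2 x + t3 x)) by lra. field.
Qed.

Lemma fact_mul_le_fact_add p q : (fact p * fact q <= fact (p + q))%nat.
Proof. induction p; simpl; [lia|]. pose proof (lt_O_fact q). nia. Qed.

Lemma Rabs_level_weight_le_1 a : Rabs (level_weight a) <= 1.
Proof.
  unfold level_weight.
  destruct (Nat.eqb _ 0); [rewrite Rabs_R0; lra|].
  destruct (Nat.eqb _ 0); [rewrite Rabs_R1; lra|].
  set (p := level_count Top a). set (q := level_count Bottom a).
  unfold binomR. replace (p + q - p)%nat with q by lia.
  pose proof (le_INR _ _ (fact_mul_le_fact_add p q)) as H. rewrite mult_INR in H.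
  pose proof (lt_INR _ _ (lt_O_fact p)). pose proof (lt_INR _ _ (lt_O_fact q)). simpl in *.
  assert (1 <= INR (fact (p + q)) / (INR (fact p) * INR (fact q))).
  { apply Rmult_le_reg_r with (INR (fact p) * INR (fact q)); [nra|].
    unfold Rdiv. rewrite Rmult_assoc, Rinv_l by nra. lra. }
  rewrite Rabs_pos_eq by (left; apply Rinv_0_lt_compat; lra).
  rewrite <- Rinv_1. apply Rinv_le_contravar; lra.
Qed.

Definition level_sum (n : nat) (c : level) (th : R) : C :=
  Csum (seq 0 (S n)) (fun m => if level_eqb (level_of n m) c then emode m th else RtoC 0).

Lemma level_sum_eq n c th : (1 <= n)%nat ->
  level_sum n c th = match c with
                     | Bottom => RtoC 1
                     | Inner => Csum (seq 1 (n - 1)) (fun m => emode m th)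
                     | Top => emode n th
                     end.
Proof.
  intros Hn. unfold level_sum.
  assert (Hseq : seq 0 (S n) = 0%nat :: seq 1 (n - 1) ++ [n]).
  { destruct n as [|n']; [lia|]. rewrite seq_S. simpl. now rewrite Nat.sub_0_r. }
  rewrite Hseq.
  rewrite Csum_cons, Csum_app. simpl Csum at 2.
  assert (Hinner : forall m, In m (seq 1 (n - 1)) -> level_of n m = Inner).
  { intros m Hm%in_seq. unfold level_of.
    destruct (Nat.eqb_spec m 0), (Nat.eqb_spec m n); auto; lia. }
  assert (Htop : level_of n n = Top)
    by (unfold level_of; destruct (Nat.eqb_spec n 0); [lia|]; now rewrite Nat.eqb_refl).
  rewrite (Csum_ext _ _ (fun m => if level_eqb Inner c then emode m th else RtoC 0))
    by (intros m Hm; now rewrite Hinner).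
  rewrite Htop. unfold level_of at 1; simpl.
  destruct c; simpl; rewrite ?emode_0, ?Csum_zero by reflexivity; ring.
Qed.

Lemma Cmod_level_sum_le n c th : (1 <= n)%nat -> Cmod (level_sum n c th) <= dmaj n th.
Proof.
  intros Hn. pose proof (dmaj_ge_1 n th). rewrite level_sum_eq by exact Hn.
  destruct c.
  - rewrite Cmod_1. lra.
  - apply Cmod_sum_emode_le. lia.
  - unfold emode. rewrite Cmod_expi. lra.
Qed.

Definition select (b a : level) (y : C) : C := if level_eqb b a then y else RtoC 0.

Lemma Csum_all_levels_select (b : level) (H : level -> C) :
  (forall a, level_eqb b a = false -> H a = RtoC 0) -> Csum all_levels H = H b.
Proof.
  intros Hz. unfold all_levels. simpl.
  destruct b; rewrite ?(Hz Bottom), ?(Hz Inner), ?(Hz Top) by reflexivity; ring.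
Qed.

Lemma Csum_levels4_select (G : level * level * level * level -> C) b1 b2 b3 b4 y1 y2 y3 y4 :
  Csum (box4 all_levels) (fun a => let '(a1, a2, a3, a4) := a in
     Cmult (G (a1, a2, a3, a4))
       (Cmult (Cmult (Cmult (select b1 a1 y1) (select b2 a2 y2)) (select b3 a3 y3)) (select b4 a4 y4)))
  = Cmult (G (b1, b2, b3, b4)) (Cmult (Cmult (Cmult y1 y2) y3) y4).
Proof.
  rewrite Csum_box4. unfold select.
  rewrite (Csum_all_levels_select b1).
  2:{ intros a Ha. do 3 (apply Csum_zero; intros). rewrite Ha. ring. }
  rewrite (Csum_all_levels_select b2).
  2:{ intros a Ha. do 2 (apply Csum_zero; intros). rewrite Ha. ring. }
  rewrite (Csum_all_levels_select b3).
  2:{ intros a Ha. apply Csum_zero; intros. rewrite Ha. ring. }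
  rewrite (Csum_all_levels_select b4).
  2:{ intros a Ha. rewrite Ha. ring. }
  now rewrite !level_eqb_refl.
Qed.

Lemma Csum_grid_by_levels n (G : level * level * level * level -> C) x1 x2 x3 x4 :
  Csum (grid n) (fun m => let '(m1, m2, m3, m4) := m in
     Cmult (G (level_of n m1, level_of n m2, level_of n m3, level_of n m4))
           (Cmult (Cmult (Cmult (emode m1 x1) (emode m2 x2)) (emode m3 x3)) (emode m4 x4)))
  = Csum (box4 all_levels) (fun a => let '(a1, a2, a3, a4) := a in
     Cmult (G (a1, a2, a3, a4))
           (Cmult (Cmult (Cmult (level_sum n a1 x1) (level_sum n a2 x2)) (level_sum n a3 x3))
                  (level_sum n a4 x4))).
Proof.
  transitivity (Csum (grid n) (fun m => Csum (box4 all_levels) (fun a =>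
     let '(a1, a2, a3, a4) := a in let '(m1, m2, m3, m4) := m in
     Cmult (G (a1, a2, a3, a4))
       (Cmult (Cmult (Cmult (select (level_of n m1) a1 (emode m1 x1))
                            (select (level_of n m2) a2 (emode m2 x2)))
                     (select (level_of n m3) a3 (emode m3 x3)))
              (select (level_of n m4) a4 (emode m4 x4)))))).
  - apply Csum_ext. intros [[[m1 m2] m3] m4] _.
    rewrite Csum_levels4_select. reflexivity.
  - rewrite Csum_swap. apply Csum_ext. intros [[[a1 a2] a3] a4] _.
    unfold level_sum, grid. rewrite <- Csum_box4_prod, <- Csum_scal_l.
    apply Csum_ext. intros [[[m1 m2] m3] m4] _. reflexivity.
Qed.

Lemma Phi_star_by_levels n x : (1 <= n)%nat -> t1 x + t2 x + t3 x + t4 x = 0 ->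
  Phi_star n x = Cmult (RtoC (/ (4 * INR n ^ 3)))
    (Csum (box4 all_levels) (fun a => let '(a1, a2, a3, a4) := a in
       Cmult (RtoC (level_weight (a1, a2, a3, a4)))
         (Cmult (Cmult (Cmult (level_sum n a1 (t1 x)) (level_sum n a2 (t2 x)))
                       (level_sum n a3 (t3 x))) (level_sum n a4 (t4 x))))).
Proof.
  intros Hn Hs. unfold Phi_star. f_equal.
  rewrite <- (Csum_perm _ _ _ (hn_point_perm n)), Csum_map, Csum_filter.
  rewrite <- (Csum_grid_by_levels n (fun a => RtoC (level_weight a))).
  apply Csum_ext. intros [[[a b] c] d] Hm.
  destruct (has_zero (a, b, c, d)) eqn:Hz.
  - rewrite coef_hn_point, phi_hn_point; auto. now apply filter_In.
  - replace (level_weight _) with 0; [ring|].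
    unfold level_weight, level_count. rewrite !length_filter4, !level_of_Bottom.
    simpl in Hz. rewrite !Bool.orb_false_iff in Hz. destruct Hz as [[[-> ->] ->] ->].
    reflexivity.
Qed.

Definition dmaj3 (n : nat) (x : V4) : R :=
  dmaj n (t2 x) * dmaj n (t3 x) * dmaj n (t4 x) + dmaj n (t1 x) * dmaj n (t3 x) * dmaj n (t4 x) +
  dmaj n (t1 x) * dmaj n (t2 x) * dmaj n (t4 x) + dmaj n (t1 x) * dmaj n (t2 x) * dmaj n (t3 x).

Lemma prod4_le_triples c1 c2 c3 c4 k1 k2 k3 k4 :
  0 <= c1 <= k1 -> 0 <= c2 <= k2 -> 0 <= c3 <= k3 -> 0 <= c4 <= k4 ->
  (c1 = 1 \/ c2 = 1 \/ c3 = 1 \/ c4 = 1) ->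
  c1 * c2 * c3 * c4 <= k2 * k3 * k4 + k1 * k3 * k4 + k1 * k2 * k4 + k1 * k2 * k3.
Proof.
  intros H1 H2 H3 H4 Hone.
  assert (Hmono : forall u1 u2 u3 v1 v2 v3 : R, 0 <= u1 <= v1 -> 0 <= u2 <= v2 -> 0 <= u3 <= v3 ->
                  u1 * u2 * u3 <= v1 * v2 * v3).
  { intros. apply Rmult_le_compat; try apply Rmult_le_compat; try apply Rmult_le_pos; lra. }
  assert (0 <= k1 * k2 * k3 /\ 0 <= k1 * k2 * k4 /\ 0 <= k1 * k3 * k4 /\ 0 <= k2 * k3 * k4)
    by (repeat split; repeat apply Rmult_le_pos; lra).
  destruct Hone as [-> | [-> | [-> | ->]]].
  - pose proof (Hmono c2 c3 c4 k2 k3 k4 H2 H3 H4). lra.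
  - pose proof (Hmono c1 c3 c4 k1 k3 k4 H1 H3 H4). lra.
  - pose proof (Hmono c1 c2 c4 k1 k2 k4 H1 H2 H4). lra.
  - pose proof (Hmono c1 c2 c3 k1 k2 k3 H1 H2 H3). lra.
Qed.

(** Only level patterns containing [Bottom] carry weight, and [level_sum] of
    [Bottom] is [1]: every term is a product of at most three majorants. *)
Lemma Cmod_Phi_star_le n x : (1 <= n)%nat -> t1 x + t2 x + t3 x + t4 x = 0 ->
  Cmod (Phi_star n x) <= / (4 * INR n ^ 3) * (81 * dmaj3 n x).
Proof.
  intros Hn Hs.
  assert (Hc : 0 < / (4 * INR n ^ 3))
    by (apply Rinv_0_lt_compat; pose proof (pow_lt (INR n) 3 (lt_0_INR n ltac:(lia))); lra).
  rewrite Phi_star_by_levels, Cmod_mult, Cmod_R, Rabs_pos_eq by (assumption || lra).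
  apply Rmult_le_compat_l; [lra|].
  eapply Rle_trans; [apply Cmod_Csum_le|].
  replace 81 with (INR (length (box4 all_levels))) by (simpl; lra).
  apply rsum_le_const. intros [[[a1 a2] a3] a4] _.
  rewrite !Cmod_mult, Cmod_R.
  assert (Hw := Rabs_level_weight_le_1 (a1, a2, a3, a4)).
  assert (Hbound : forall a th, 0 <= Cmod (level_sum n a th) <= dmaj n th)
    by (split; [apply Cmod_ge_0 | now apply Cmod_level_sum_le]).
  set (P := Cmod (level_sum n a1 (t1 x)) * Cmod (level_sum n a2 (t2 x)) *
            Cmod (level_sum n a3 (t3 x)) * Cmod (level_sum n a4 (t4 x))).
  assert (HP : 0 <= P) by (unfold P; repeat apply Rmult_le_pos; apply Hbound).
  destruct (Nat.eqb_spec (level_count Bottom (a1, a2, a3, a4)) 0) as [H0|H0].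
  { unfold level_weight. rewrite H0, Nat.eqb_refl, Rabs_R0, Rmult_0_l.
    pose proof (dmaj_ge_1 n (t1 x)). pose proof (dmaj_ge_1 n (t2 x)).
    pose proof (dmaj_ge_1 n (t3 x)). pose proof (dmaj_ge_1 n (t4 x)).
    unfold dmaj3. repeat apply Rplus_le_le_0_compat; repeat apply Rmult_le_pos; lra. }
  assert (HP3 : P <= dmaj3 n x).
  { apply prod4_le_triples; try apply Hbound.
    assert (Hb : forall th, Cmod (level_sum n Bottom th) = 1)
      by (intros; rewrite level_sum_eq, Cmod_1; auto).
    destruct a1, a2, a3, a4; try (exfalso; apply H0; reflexivity); rewrite ?Hb; tauto. }
  apply Rle_trans with (1 * P); [apply Rmult_le_compat_r|]; lra.
Qed.

(** * Summing the majorant over the nodes *)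

Lemma sin_lb_eq x : sin_lb x = x - x ^ 3 / 6 + x ^ 5 / 120 - x ^ 7 / 5040.
Proof.
  unfold sin_lb, sin_approx, sin_term. cbn [sum_f_R0].
  replace (INR (fact (2 * 0 + 1))) with 1 by (rewrite INR_IZR_INZ; reflexivity).
  replace (INR (fact (2 * 1 + 1))) with 6 by (rewrite INR_IZR_INZ; reflexivity).
  replace (INR (fact (2 * 2 + 1))) with 120 by (rewrite INR_IZR_INZ; reflexivity).
  replace (INR (fact (2 * 3 + 1))) with 5040 by (rewrite INR_IZR_INZ; reflexivity).
  simpl. field.
Qed.

Lemma sin_ge_third x : 0 <= x <= 2 -> x / 3 <= sin x.
Proof.
  intros H. pose proof PI2_3_2. destruct (SIN x) as [Hlb _]; [lra|lra|].
  rewrite sin_lb_eq in Hlb.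
  assert (x * x <= 4) by nra.
  assert (x ^ 3 <= 4 * x) by (simpl; nra).
  assert (0 <= x ^ 5) by (apply pow_le; lra).
  assert (x ^ 7 <= 42 * x ^ 5) by (replace (x ^ 7) with (x ^ 5 * (x * x)) by ring; nra).
  lra.
Qed.

Lemma Rabs_sin_PI_ge z : Rabs z <= 1/2 -> Rabs z <= Rabs (sin (PI * z)).
Proof.
  pose proof PI2_3_2. pose proof PI_4.
  assert (Hpos : forall u, 0 <= u <= 1/2 -> u <= Rabs (sin (PI * u))).
  { intros u Hu. pose proof (sin_ge_third (PI * u) ltac:(split; nra)).
    rewrite Rabs_pos_eq; nra. }
  intros Hz. destruct (Rle_dec 0 z).
  - rewrite Rabs_pos_eq in * by lra. now apply Hpos.
  - rewrite Rabs_left in * by lra.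
    replace (PI * z) with (- (PI * - z)) by ring.
    rewrite sin_neg, Rabs_Ropp. apply Hpos. lra.
Qed.

Lemma Rabs_sin_PI_shift y c : (c = -2 \/ c = -1 \/ c = 0 \/ c = 1 \/ c = 2) ->
  Rabs (sin (PI * y)) = Rabs (sin (PI * (y - c))).
Proof.
  assert (Hpi : forall u, Rabs (sin (u + PI)) = Rabs (sin u))
    by (intros u; rewrite neg_sin, Rabs_Ropp; reflexivity).
  intros [-> | [-> | [-> | [-> | ->]]]].
  - replace (PI * (y - -2)) with (PI * y + PI + PI) by ring. now rewrite !Hpi.
  - replace (PI * (y - -1)) with (PI * y + PI) by ring. now rewrite Hpi.
  - now rewrite Rminus_0_r.
  - replace (PI * y) with (PI * (y - 1) + PI) by ring. now rewrite Hpi.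
  - replace (PI * y) with (PI * (y - 2) + PI + PI) by ring. now rewrite !Hpi.
Qed.

(** Jordan's inequality near the integer [c] turns [D_n(y)] into a harmonic weight in [4n (y - c)]. *)
Lemma dmaj_le_near n y c : (1 <= n)%nat -> Rabs (y - c) <= 1/2 ->
  Rabs (sin (PI * y)) = Rabs (sin (PI * (y - c))) ->
  dmaj n y <= 8 * INR n / (1 + Rabs (4 * INR n * y - 4 * INR n * c)).
Proof.
  intros Hn He Hs. apply le_INR in Hn. simpl in Hn.
  pose proof (Rabs_sin_PI_ge _ He) as Hsin. rewrite <- Hs in Hsin.
  replace (4 * INR n * y - 4 * INR n * c) with (4 * INR n * (y - c)) by ring.
  rewrite Rabs_mult, (Rabs_pos_eq (4 * INR n)) by lra.
  pose proof (Rabs_pos (y - c)). set (e := Rabs (y - c)) in *.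
  unfold dmaj. set (M := Rmax _ _).
  assert (HM1 : Rabs (sin (PI * y)) <= M) by apply Rmax_l.
  assert (HM2 : / (INR n + 1) <= M) by apply Rmax_r.
  assert (HnM : 1 <= (INR n + 1) * M).
  { apply Rmult_le_reg_l with (/ (INR n + 1)); [apply Rinv_0_lt_compat; lra|].
    rewrite <- Rmult_assoc, Rinv_l; lra. }
  assert (HMpos : 0 < M) by (eapply Rlt_le_trans; [|exact HM2]; apply Rinv_0_lt_compat; lra).
  assert (Hkey : 1 + 4 * INR n * e <= 8 * INR n * M)
    by (destruct (Rle_dec (4 * INR n * e) 1); nra).
  apply (Rmult_le_reg_l M); [lra|]. rewrite Rinv_r by lra.
  replace (M * (8 * INR n / (1 + 4 * INR n * e))) with (8 * INR n * M / (1 + 4 * INR n * e))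
    by (field; nra).
  apply Rmult_le_reg_r with (1 + 4 * INR n * e); [nra|].
  replace (8 * INR n * M / (1 + 4 * INR n * e) * (1 + 4 * INR n * e)) with (8 * INR n * M)
    by (field; nra).
  lra.
Qed.

Lemma dmaj_le_sum_near n y : (1 <= n)%nat -> Rabs y <= 2 ->
  dmaj n y <= rsum [-2; -1; 0; 1; 2] (fun c => 8 * INR n / (1 + Rabs (4 * INR n * y - 4 * INR n * c))).
Proof.
  intros Hn Hy. pose proof (le_INR _ _ Hn) as HnR. simpl in HnR.
  assert (Hpos : forall c, 0 <= 8 * INR n / (1 + Rabs (4 * INR n * y - 4 * INR n * c))).
  { intros c. pose proof (Rabs_pos (4 * INR n * y - 4 * INR n * c)). apply Rle_mult_inv_pos; lra. }
  pose proof (Hpos (-2)). pose proof (Hpos (-1)). pose proof (Hpos 0).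
  pose proof (Hpos 1). pose proof (Hpos 2).
  apply Rabs_le_between in Hy. simpl.
  assert (Hnear : forall c, (c = -2 \/ c = -1 \/ c = 0 \/ c = 1 \/ c = 2) -> Rabs (y - c) <= 1/2 ->
            dmaj n y <= 8 * INR n / (1 + Rabs (4 * INR n * y - 4 * INR n * c)))
    by (intros c Hc Hyc; apply dmaj_le_near; auto; now apply Rabs_sin_PI_shift).
  destruct (Rle_dec y (-3/2)); [|destruct (Rle_dec y (-1/2)); [|destruct (Rle_dec y (1/2));
    [|destruct (Rle_dec y (3/2))]]].
  - pose proof (Hnear (-2) ltac:(lra) ltac:(apply Rabs_le; lra)). lra.
  - pose proof (Hnear (-1) ltac:(lra) ltac:(apply Rabs_le; lra)). lra.
  - pose proof (Hnear 0 ltac:(lra) ltac:(apply Rabs_le; lra)). lra.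
  - pose proof (Hnear 1 ltac:(lra) ltac:(apply Rabs_le; lra)). lra.
  - pose proof (Hnear 2 ltac:(lra) ltac:(apply Rabs_le; lra)). lra.
Qed.

(** An antiderivative of [1 / (1 + |u|)]; it telescopes the harmonic-type sums. *)
Definition slog (u : R) : R := if Rle_dec 0 u then ln (1 + u) else - ln (1 - u).

Lemma ln_succ_sub_ge a : 0 < a -> / (a + 1) <= ln (a + 1) - ln a.
Proof.
  intros Ha. rewrite <- ln_div by lra.
  pose proof (exp_ineq1_le (ln (a / (a + 1)))) as H.
  rewrite exp_ln in H by (apply Rdiv_lt_0_compat; lra).
  rewrite <- (Rinv_div a (a + 1)), ln_Rinv by (apply Rdiv_lt_0_compat; lra).
  replace (/ (a + 1)) with (1 - a / (a + 1)) by (field; lra). lra.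
Qed.

Lemma inv_succ_abs_le_slog u : / (1 + Rabs u) <= 3 * (slog (u + 1/2) - slog (u - 1/2)).
Proof.
  unfold slog. pose proof ln_lt_2 as Hln2.
  destruct (Rle_dec (1/2) u) as [H1|H1]; [|destruct (Rle_dec (-1/2) u) as [H2|H2]].
  - rewrite Rabs_pos_eq by lra.
    destruct (Rle_dec 0 (u + 1/2)); [|lra]. destruct (Rle_dec 0 (u - 1/2)); [|lra].
    pose proof (ln_succ_sub_ge (1 + (u - 1/2)) ltac:(lra)) as H.
    replace (1 + (u - 1/2) + 1) with (1 + (u + 1/2)) in H by lra.
    assert (/ (1 + u) <= 3 * / (1 + (u + 1/2))).
    { apply Rmult_le_reg_r with ((1 + u) * (1 + (u + 1/2))); [nra|].
      field_simplify; lra. }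
    lra.
  - destruct (Rle_dec 0 (u + 1/2)); [|lra]. destruct (Rle_dec 0 (u - 1/2)); [lra|].
    assert (ln 2 <= ln (1 + (u + 1/2)) + ln (1 - (u - 1/2))).
    { rewrite <- ln_mult by lra. apply ln_le; nra. }
    assert (/ (1 + Rabs u) <= 1).
    { pose proof (Rabs_pos u). rewrite <- Rinv_1. apply Rinv_le_contravar; lra. }
    lra.
  - rewrite Rabs_left by lra.
    destruct (Rle_dec 0 (u + 1/2)); [lra|]. destruct (Rle_dec 0 (u - 1/2)); [lra|].
    pose proof (ln_succ_sub_ge (1 - (u + 1/2)) ltac:(lra)) as H.
    replace (1 - (u + 1/2) + 1) with (1 - (u - 1/2)) in H by lra.
    assert (/ (1 + - u) <= 3 * / (1 - (u - 1/2))).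
    { apply Rmult_le_reg_r with ((1 + - u) * (1 - (u - 1/2))); [nra|].
      field_simplify; lra. }
    lra.
Qed.

Lemma Rabs_slog_le u : Rabs (slog u) <= ln (1 + Rabs u).
Proof.
  assert (Hl : forall v, 0 <= v -> 0 <= ln (1 + v))
    by (intros; rewrite <- ln_1; apply ln_le; lra).
  unfold slog. destruct (Rle_dec 0 u).
  - rewrite (Rabs_pos_eq u), Rabs_pos_eq by (try apply Hl; lra). lra.
  - replace (1 - u) with (1 + - u) by ring.
    rewrite Rabs_Ropp, (Rabs_left u), Rabs_pos_eq by (try apply Hl; lra). lra.
Qed.

Lemma rsum_telescope (H : nat -> R) s L :
  rsum (seq s L) (fun i => H (S i) - H i) = H (s + L)%nat - H s.
Proof.
  revert s; induction L as [|L IH]; intros s; simpl; [rewrite Nat.add_0_r; ring|].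
  rewrite IH. replace (S s + L)%nat with (s + S L)%nat by lia. ring.
Qed.

Lemma rsum_zrange_harmonic n w : (1 <= n)%nat -> Rabs w <= 12 * INR n ->
  rsum (zrange n) (fun k => / (1 + Rabs (IZR k - w))) <= 6 * ln (18 * INR n).
Proof.
  intros Hn Hw. apply le_INR in Hn. simpl in Hn.
  unfold zrange. rewrite rsum_map.
  set (H := fun i : nat => slog (INR i - 4 * INR n - w - 1/2)).
  apply Rle_trans with (rsum (seq 0 (8 * n + 1)) (fun i => 3 * (H (S i) - H i))).
  { apply rsum_le. intros i _. unfold H. rewrite S_INR.
    rewrite minus_IZR, mult_IZR, <- !INR_IZR_INZ.
    replace (INR i + 1 - 4 * INR n - w - 1/2) with ((INR i - 4 * INR n - w) + 1/2) by lra.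
    replace (INR i - 4 * INR n - w - 1/2) with ((INR i - 4 * INR n - w) - 1/2) by lra.
    apply inv_succ_abs_le_slog. }
  rewrite rsum_scal_l, rsum_telescope. unfold H.
  replace (INR (0 + (8 * n + 1))) with (8 * INR n + 1)
    by (rewrite Nat.add_0_l, plus_INR, mult_INR; simpl; ring).
  replace (INR 0) with 0 by reflexivity.
  assert (Hln : forall u, Rabs u <= 18 * INR n - 1 -> Rabs (slog u) <= ln (18 * INR n)).
  { intros u Hu. eapply Rle_trans; [apply Rabs_slog_le|].
    apply ln_le; [pose proof (Rabs_pos u); lra | lra]. }
  pose proof (Hln (8 * INR n + 1 - 4 * INR n - w - 1/2)) as H1.
  pose proof (Hln (0 - 4 * INR n - w - 1/2)) as H2.
  apply Rabs_le_between in Hw.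
  assert (Rabs (8 * INR n + 1 - 4 * INR n - w - 1/2) <= 18 * INR n - 1)
    by (apply Rabs_le; lra).
  assert (Rabs (0 - 4 * INR n - w - 1/2) <= 18 * INR n - 1) by (apply Rabs_le; lra).
  apply Rabs_le_between in H1, H2; auto. lra.
Qed.

Lemma IZR_div_4n_bound n z : (1 <= n)%nat -> (- (4 * Z.of_nat n) <= z <= 4 * Z.of_nat n)%Z ->
  -1 <= IZR z / (4 * INR n) <= 1.
Proof.
  intros Hn Hz.
  replace (4 * INR n) with (IZR (4 * Z.of_nat n)) by (rewrite mult_IZR, <- INR_IZR_INZ; reflexivity).
  assert (0 < IZR (4 * Z.of_nat n)) by (apply IZR_lt; lia).
  destruct Hz as [Hl Hr]. apply IZR_le in Hl, Hr. rewrite opp_IZR in Hl.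
  split; apply (Rmult_le_reg_r (IZR (4 * Z.of_nat n))); try lra; field_simplify; lra.
Qed.

Lemma rsum_dmaj_nodes_le n tt : (1 <= n)%nat -> Rabs tt <= 1 ->
  rsum (zrange n) (fun k => dmaj n (tt - IZR k / (4 * INR n))) <= 240 * INR n * ln (18 * INR n).
Proof.
  intros Hn Ht. pose proof (le_INR _ _ Hn) as HnR. simpl in HnR.
  apply Rabs_le_between in Ht.
  apply Rle_trans with (rsum (zrange n) (fun k => rsum [-2; -1; 0; 1; 2] (fun c =>
      8 * INR n * / (1 + Rabs (IZR k - 4 * INR n * (tt - c)))))).
  { apply rsum_le. intros k Hk%in_zrange.
    pose proof (IZR_div_4n_bound n k Hn ltac:(lia)).
    eapply Rle_trans; [apply dmaj_le_sum_near; auto; apply Rabs_le; lra|].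
    apply Req_le, rsum_ext. intros c _. unfold Rdiv. do 3 f_equal.
    rewrite <- Rabs_Ropp. f_equal. field. lra. }
  rewrite rsum_swap.
  replace (240 * INR n * ln (18 * INR n)) with (INR 5 * (8 * INR n * (6 * ln (18 * INR n))))
    by (simpl; ring).
  apply rsum_le_const. intros c Hc.
  rewrite rsum_scal_l. apply Rmult_le_compat_l; [lra|].
  apply rsum_zrange_harmonic; auto.
  assert (-2 <= c <= 2) by (simpl in Hc; lra).
  rewrite Rabs_mult, Rabs_pos_eq by lra.
  assert (Rabs (tt - c) <= 3) by (apply Rabs_le; lra).
  nra.
Qed.

(** * Summing the kernel bound over H_n^* *)

Definition box3 {A : Type} (l : list A) : list (A * A * A) :=
  flat_map (fun a => flat_map (fun b => map (fun c => (a, b, c)) l) l) l.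

Lemma in_box3 {A} (l : list A) a b c : In a l -> In b l -> In c l -> In (a, b, c) (box3 l).
Proof.
  intros Ha Hb Hc. apply in_flat_map. exists a; split; auto.
  apply in_flat_map. exists b; split; auto. apply in_map_iff. exists c; auto.
Qed.

Lemma rsum_box3_prod {A} (l : list A) f g h :
  rsum (box3 l) (fun y => let '(a, b, c) := y in f a * g b * h c) = rsum l f * rsum l g * rsum l h.
Proof.
  unfold box3. rewrite rsum_flat_map, <- !rsum_scal_r.
  apply rsum_ext; intros a _. rewrite rsum_flat_map, <- (rsum_scal_l l (f a) g), <- rsum_scal_r.
  apply rsum_ext; intros b _. rewrite rsum_map, <- rsum_scal_l. reflexivity.
Qed.

Lemma Z4_ext (j j' : Z4) : k1 j = k1 j' -> k2 j = k2 j' -> k3 j = k3 j' -> k4 j = k4 j' -> j = j'.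
Proof. destruct j as [[[a b] c] d], j' as [[[a' b'] c'] d']. simpl. congruence. Qed.

Lemma Hn_star_sum n j : In j (Hn_star_list n) -> (k1 j + k2 j + k3 j + k4 j = 0)%Z.
Proof. rewrite in_Hn_star_list. now intros []. Qed.

Lemma Hn_star_in_zrange n j : In j (Hn_star_list n) ->
  In (k1 j) (zrange n) /\ In (k2 j) (zrange n) /\ In (k3 j) (zrange n) /\ In (k4 j) (zrange n).
Proof.
  destruct j as [[[a b] c] d]. intros Hj.
  change (Hn_star_list n) with (filter (in_Hn_starb n) (box4 (zrange n))) in Hj.
  apply filter_In in Hj as [Hj _]. now apply in_box4 in Hj.
Qed.

(** Three coordinates of a point of [H_n^*] determine the fourth. *)
Lemma rsum_Hn_star_triple_le n (pa pb pc : Z4 -> Z) (f g h : Z -> R) B :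
  (forall j j', In j (Hn_star_list n) -> In j' (Hn_star_list n) ->
     pa j = pa j' -> pb j = pb j' -> pc j = pc j' -> j = j') ->
  (forall j, In j (Hn_star_list n) ->
     In (pa j) (zrange n) /\ In (pb j) (zrange n) /\ In (pc j) (zrange n)) ->
  (forall k, 0 <= f k) -> (forall k, 0 <= g k) -> (forall k, 0 <= h k) ->
  rsum (zrange n) f <= B -> rsum (zrange n) g <= B -> rsum (zrange n) h <= B ->
  rsum (Hn_star_list n) (fun j => f (pa j) * g (pb j) * h (pc j)) <= B ^ 3.
Proof.
  intros Hinj Hin Hf Hg Hh Sf Sg Sh.
  set (F := fun y : Z * Z * Z => let '(a, b, c) := y in f a * g b * h c).
  apply Rle_trans with (rsum (box3 (zrange n)) F).
  - rewrite (rsum_ext _ _ (fun j => F (pa j, pb j, pc j))) by reflexivity.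
    rewrite <- (rsum_map _ (fun j => (pa j, pb j, pc j))).
    apply rsum_incl.
    + repeat decide equality.
    + apply FinFun.Injective_map_NoDup_in; [|apply NoDup_Hn_star_list].
      intros j j' Hj Hj' E. injection E as Ea Eb Ec. auto.
    + intros y (j & <- & Hj)%in_map_iff. destruct (Hin j Hj) as (? & ? & ?). now apply in_box3.
    + intros [[a b] c]. simpl. repeat apply Rmult_le_pos; auto.
  - unfold F. rewrite rsum_box3_prod.
    pose proof (rsum_nonneg (zrange n) f (fun k _ => Hf k)).
    pose proof (rsum_nonneg (zrange n) g (fun k _ => Hg k)).
    pose proof (rsum_nonneg (zrange n) h (fun k _ => Hh k)).
    replace (B ^ 3) with (B * B * B) by ring.
    apply Rmult_le_compat; try apply Rmult_le_pos; try apply Rmult_le_compat; lra.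
Qed.

Lemma rsum_dmaj3_nodes_le n t B : (1 <= n)%nat ->
  rsum (zrange n) (fun k => dmaj n (t1 t - IZR k / (4 * INR n))) <= B ->
  rsum (zrange n) (fun k => dmaj n (t2 t - IZR k / (4 * INR n))) <= B ->
  rsum (zrange n) (fun k => dmaj n (t3 t - IZR k / (4 * INR n))) <= B ->
  rsum (zrange n) (fun k => dmaj n (t4 t - IZR k / (4 * INR n))) <= B ->
  rsum (Hn_star_list n) (fun j => dmaj3 n (vsub t (node n j))) <= 4 * B ^ 3.
Proof.
  intros Hn S1 S2 S3 S4.
  set (K := fun tt k => dmaj n (tt - IZR k / (4 * INR n))).
  assert (HK : forall tt k, 0 <= K tt k)
    by (intros; pose proof (dmaj_ge_1 n (tt - IZR k / (4 * INR n))); unfold K; lra).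
  unfold dmaj3. rewrite !rsum_plus.
  assert (Hsum := Hn_star_sum n). assert (Hz := Hn_star_in_zrange n).
  change (rsum (Hn_star_list n) (fun j => K (t2 t) (k2 j) * K (t3 t) (k3 j) * K (t4 t) (k4 j)) +
          rsum (Hn_star_list n) (fun j => K (t1 t) (k1 j) * K (t3 t) (k3 j) * K (t4 t) (k4 j)) +
          rsum (Hn_star_list n) (fun j => K (t1 t) (k1 j) * K (t2 t) (k2 j) * K (t4 t) (k4 j)) +
          rsum (Hn_star_list n) (fun j => K (t1 t) (k1 j) * K (t2 t) (k2 j) * K (t3 t) (k3 j))
          <= 4 * B ^ 3).
  assert (rsum (Hn_star_list n) (fun j => K (t2 t) (k2 j) * K (t3 t) (k3 j) * K (t4 t) (k4 j)) <= B ^ 3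
        /\ rsum (Hn_star_list n) (fun j => K (t1 t) (k1 j) * K (t3 t) (k3 j) * K (t4 t) (k4 j)) <= B ^ 3
        /\ rsum (Hn_star_list n) (fun j => K (t1 t) (k1 j) * K (t2 t) (k2 j) * K (t4 t) (k4 j)) <= B ^ 3
        /\ rsum (Hn_star_list n) (fun j => K (t1 t) (k1 j) * K (t2 t) (k2 j) * K (t3 t) (k3 j)) <= B ^ 3)
    as (A1 & A2 & A3 & A4); [|lra].
  repeat split; apply rsum_Hn_star_triple_le; auto;
    try (intros j j' Hj Hj' E1 E2 E3; apply Z4_ext; auto;
         pose proof (Hsum j Hj); pose proof (Hsum j' Hj'); lia);
    intros j Hj; destruct (Hz j Hj) as (? & ? & ? & ?); auto.
Qed.

Lemma node_in_Omega_bar n j : (1 <= n)%nat -> In j (Hn_star_list n) -> in_Omega_bar (node n j).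
Proof.
  intros Hn Hj. pose proof (lt_0_INR n ltac:(lia)).
  apply in_Hn_star_list in Hj. destruct j as [[[a b] c] d].
  unfold in_Hn_star, k1, k2, k3, k4 in Hj. cbv beta iota zeta in Hj.
  destruct Hj as (Hs & _ & _ & _ & H12 & H13 & H14 & H23 & H24 & H34).
  assert (Hscale : forall u v : Z, (- (4 * Z.of_nat n) <= u - v <= 4 * Z.of_nat n)%Z ->
            -1 <= IZR u * / (4 * INR n) - IZR v * / (4 * INR n) <= 1).
  { intros u v Huv.
    replace (IZR u * / (4 * INR n) - IZR v * / (4 * INR n)) with (IZR (u - v) / (4 * INR n))
      by (rewrite minus_IZR; field; lra).
    now apply IZR_div_4n_bound. }
  unfold in_Omega_bar, node, t1, t2, t3, t4, k1, k2, k3, k4. cbv beta iota zeta.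
  repeat split; try apply Hscale; auto.
  replace (IZR a * / (4 * INR n) + IZR b * / (4 * INR n) + IZR c * / (4 * INR n) + IZR d * / (4 * INR n))
    with (IZR (a + b + c + d) * / (4 * INR n)) by (rewrite !plus_IZR; ring).
  rewrite Hs. ring.
Qed.

Lemma vsub_node_sum n t j : in_Omega_bar t -> In j (Hn_star_list n) ->
  let x := vsub t (node n j) in t1 x + t2 x + t3 x + t4 x = 0.
Proof.
  intros [Ht _] Hj. apply Hn_star_sum in Hj. destruct j as [[[a b] c] d].
  unfold k1, k2, k3, k4 in Hj. cbv beta iota in Hj. cbv zeta.
  change (t1 (vsub t (node n (a, b, c, d)))) with (t1 t - IZR a * / (4 * INR n)).
  change (t2 (vsub t (node n (a, b, c, d)))) with (t2 t - IZR b * / (4 * INR n)).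
  change (t3 (vsub t (node n (a, b, c, d)))) with (t3 t - IZR c * / (4 * INR n)).
  change (t4 (vsub t (node n (a, b, c, d)))) with (t4 t - IZR d * / (4 * INR n)).
  replace (t1 t - IZR a * / (4 * INR n) + (t2 t - IZR b * / (4 * INR n)) +
           (t3 t - IZR c * / (4 * INR n)) + (t4 t - IZR d * / (4 * INR n)))
    with ((t1 t + t2 t + t3 t + t4 t) - IZR (a + b + c + d) * / (4 * INR n))
    by (rewrite !plus_IZR; ring).
  rewrite Hj, Ht. ring.
Qed.

Lemma ln_18n_le n : (2 <= n)%nat -> 0 <= ln (18 * INR n) <= 35 * ln (INR n).
Proof.
  intros Hn. apply le_INR in Hn. simpl in Hn.
  pose proof ln_lt_2.
  assert (ln 2 <= ln (INR n)) by (apply ln_le; lra).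
  assert (ln 18 <= 17) by (pose proof (exp_ineq1_le (ln 18)) as H1; rewrite exp_ln in H1; lra).
  split.
  - rewrite <- ln_1. apply ln_le; lra.
  - rewrite ln_mult by lra. lra.
Qed.

Lemma Omega_bar_coord_bound t : in_Omega_bar t ->
  Rabs (t1 t) <= 1 /\ Rabs (t2 t) <= 1 /\ Rabs (t3 t) <= 1 /\ Rabs (t4 t) <= 1.
Proof. intros (Hs & H12 & H13 & H14 & H23 & H24 & H34). repeat split; apply Rabs_le; lra. Qed.

Lemma Cmod_In_star_le n f M t : (1 <= n)%nat ->
  (forall s, in_Omega_bar s -> Cmod (f s) <= M) -> in_Omega_bar t ->
  Cmod (In_star n f t) <= 81 * 240 ^ 3 * ln (18 * INR n) ^ 3 * M.
Proof.
  intros Hn HM Ht. pose proof (lt_0_INR n ltac:(lia)) as HnR.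
  assert (HM0 : 0 <= M) by (pose proof (HM t Ht); pose proof (Cmod_ge_0 (f t)); lra).
  assert (Hc : 0 < / (4 * INR n ^ 3)) by (apply Rinv_0_lt_compat; pose proof (pow_lt _ 3 HnR); lra).
  set (B := 240 * INR n * ln (18 * INR n)).
  destruct (Omega_bar_coord_bound t Ht) as (T1 & T2 & T3 & T4).
  assert (HQ : rsum (Hn_star_list n) (fun j => dmaj3 n (vsub t (node n j))) <= 4 * B ^ 3)
    by (apply rsum_dmaj3_nodes_le; auto; apply rsum_dmaj_nodes_le; auto).
  unfold In_star. eapply Rle_trans; [apply Cmod_Csum_le|].
  apply Rle_trans with (rsum (Hn_star_list n) (fun j =>
     M * / (4 * INR n ^ 3) * 81 * dmaj3 n (vsub t (node n j)))).
  - apply rsum_le. intros j Hj. rewrite Cmod_mult, !Rmult_assoc.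
    apply Rmult_le_compat; try apply Cmod_ge_0.
    + apply HM, node_in_Omega_bar; auto.
    + apply Cmod_Phi_star_le; auto. now apply vsub_node_sum.
  - rewrite rsum_scal_l.
    apply Rle_trans with (M * / (4 * INR n ^ 3) * 81 * (4 * B ^ 3)).
    + apply Rmult_le_compat_l; [|exact HQ]. repeat apply Rmult_le_pos; lra.
    + apply Req_le. unfold B. field. lra.
Qed.

Theorem theorem3p19 :
  exists c : R, forall n : nat, (2 <= n)%nat ->
    forall f : V4 -> C, continuous_on_Omega_bar f ->
    forall M : R, (forall s, in_Omega_bar s -> Cmod (f s) <= M) ->
    forall t, in_Omega_bar t ->
      Cmod (In_star n f t) <= c * (ln (INR n)) ^ 3 * M.
Proof.
  exists (81 * 240 ^ 3 * 35 ^ 3).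
  intros n Hn f _ M HM t Ht.
  assert (HM0 : 0 <= M) by (pose proof (HM t Ht); pose proof (Cmod_ge_0 (f t)); lra).
  eapply Rle_trans; [apply Cmod_In_star_le; auto; lia|].
  destruct (ln_18n_le n Hn) as [L0 L1].
  assert (Hln : ln (18 * INR n) ^ 3 <= (35 * ln (INR n)) ^ 3) by (apply pow_incr; lra).
  rewrite Rpow_mult_distr in Hln.
  apply Rmult_le_compat_r; [exact HM0|].
  replace (81 * 240 ^ 3 * 35 ^ 3 * ln (INR n) ^ 3) with (81 * 240 ^ 3 * (35 ^ 3 * ln (INR n) ^ 3))
    by ring.
  apply Rmult_le_compat_l; lra.
Qed.
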